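(* Let $G$ be a finite group acting (via a homomorphism $\Gamma_G: G \to S_A$) on a finite set $A = X \sqcup Y$ of cardinality $n$, and suppose the action is partition-preserving. Let $\Omega = \Omega_X \sqcup \Omega_Y$ be a set of colors, with weight functions $\omega_X:\Omega_X\to\mathbb{N}^+$ and $\omega_Y:\Omega_Y\to\mathbb{N}^+$ having only finitely many colors of each weight, and let $f_X$, $f_Y$ be their generating functions. Let $\Phi$ be the set of valid colorings of $A$, on which $G$ acts by $(g\varphi)(a)=\varphi(ga)$. Then, as formal power series in two variables, $$\sum_{a,b\ge 0} N_{a,b}\, x^a y^b = \tilde Z_G\big(f_X(x),\ldots,f_X(x^n), f_Y(y),\ldots, f_Y(y^n)\big),$$ where $N_{a,b}$ is the number of orbits of $G$ on $\Phi$ consisting of colorings $\varphi$ with $\sum_{c\in X}\omega_X(\varphi(c)) = a$ and $\sum_{c\in Y}\omega_Y(\varphi(c)) = b$.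
   Context: For a finite set $A$, $S_A$ is the group of bijections $A\to A$; every element of $S_A$ decomposes uniquely (up to order) into pairwise disjoint cycles. An action of $G$ on $A = X\sqcup Y$ is partition-preserving if for all $g\in G$ and $a\in A$: $ga\in X \iff a\in X$ and $ga\in Y\iff a\in Y$. For $g\in G$, $C_k^X(g)$ (resp. $C_k^Y(g)$) denotes the number of $k$-cycles (fixed points counting as 1-cycles) in the disjoint cycle decomposition of $\Gamma_G(g)$ contained in $X$ (resp. $Y$). The bipartite cycle index is $$\tilde Z_G(x_1,\ldots,x_n,y_1,\ldots,y_n) = \frac{1}{|G|}\sum_{g\in G} x_1^{C_1^X(g)}\cdots x_n^{C_n^X(g)}\, y_1^{C_1^Y(g)}\cdots y_n^{C_n^Y(g)}.$$ For a weight function $\omega:\Omega'\to\mathbb{N}$ with finite fibers, its generating function is $f_\omega(x)=\sum_{i\ge 0}|\omega^{-1}(i)|\,x^i$. A coloring $\varphi: A\to\Omega_X\sqcup\Omega_Y$ is valid if $\varphi(c)\in\Omega_X\iff c\in X$ and $\varphi(c)\in\Omega_Y\iff c\in Y$. *)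

From HB Require Import structures.
From mathcomp Require Import all_boot all_order all_fingroup all_algebra.
Set Implicit Arguments. Unset Strict Implicit. Unset Printing Implicit Defensive.
Import GRing.Theory.

(* ---------- Formal power series in two variables x, y, rational coefficients.
   A series F is represented by its coefficient function: F a b = [x^a y^b] F. *)
Definition fps2 := nat -> nat -> rat.
Definition fps2_zero : fps2 := fun _ _ => 0%R.
Definition fps2_one : fps2 :=
  fun a b => if (a == 0%N) && (b == 0%N) then 1%R else 0%R.
Definition fps2_add (F H : fps2) : fps2 := fun a b => (F a b + H a b)%R.
Definition fps2_mul (F H : fps2) : fps2 :=
  fun a b => (\sum_(i < a.+1) \sum_(j < b.+1) F i j * H (a - i)%N (b - j)%N)%R.
Definition fps2_scale (c : rat) (F : fps2) : fps2 := fun a b => (c * F a b)%R.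
Definition fps2_exp (F : fps2) (m : nat) : fps2 := iter m (fps2_mul F) fps2_one.

(* f(x^k) and f(y^k) for a one-variable generating function with
   coefficients f : nat -> nat  (f i = coefficient of t^i). *)
Definition substX (f : nat -> nat) (k : nat) : fps2 :=
  fun a b => if (b == 0%N) && (k %| a) then (f (a %/ k)%N)%:R%R else 0%R.
Definition substY (f : nat -> nat) (k : nat) : fps2 :=
  fun a b => if (a == 0%N) && (k %| b) then (f (b %/ k)%N)%:R%R else 0%R.

Definition cyc_count (A : finType) (s : {perm A}) (S : {set A}) (k : nat) : nat :=
  #|[set C in porbits s | (C \subset S) && (#|C| == k)]|.

(* ---------- Bipartite cycle index Z~_G(x_1..x_n, y_1..y_n), n = #|A|,
   evaluated at the series xs k (for x_k) and ys k (for y_k). *)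
Definition Ztilde (gT : finGroupType) (G : {group gT}) (A : finType)
  (Gam : gT -> {perm A}) (X Y : {set A}) (xs ys : nat -> fps2) : fps2 :=
  fps2_scale ((#|G|%:R)^-1)%R
    (\big[fps2_add/fps2_zero]_(g in G)
       \big[fps2_mul/fps2_one]_(1 <= k < #|A|.+1)
          fps2_mul (fps2_exp (xs k) (cyc_count (Gam g) X k))
                   (fps2_exp (ys k) (cyc_count (Gam g) Y k))).

Definition is_inl (T U : Type) (o : T + U) : bool :=
  if o is inl _ then true else false.
Definition is_inr (T U : Type) (o : T + U) : bool :=
  if o is inr _ then true else false.

Definition valid (A : finType) (OX OY : eqType) (X Y : {set A})
  (phi : {ffun A -> OX + OY}) : Prop :=
  forall c, ((c \in X) = is_inl (phi c)) /\ ((c \in Y) = is_inr (phi c)).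

Definition wtX (A : finType) (OX OY : eqType) (wX : OX -> nat) (X : {set A})
  (phi : {ffun A -> OX + OY}) : nat :=
  \sum_(c in X) (if phi c is inl o then wX o else 0%N).
Definition wtY (A : finType) (OX OY : eqType) (wY : OY -> nat) (Y : {set A})
  (phi : {ffun A -> OX + OY}) : nat :=
  \sum_(c in Y) (if phi c is inr o then wY o else 0%N).

Definition act_col (gT : finGroupType) (A : finType) (OX OY : eqType)
  (Gam : gT -> {perm A}) (g : gT) (phi : {ffun A -> OX + OY})
  : {ffun A -> OX + OY} := [ffun a => phi (Gam g a)].

Definition orbit_rel (gT : finGroupType) (G : {group gT}) (A : finType)
  (OX OY : eqType) (Gam : gT -> {perm A}) (phi psi : {ffun A -> OX + OY}) : Prop :=
  exists2 g, g \in G & psi = act_col Gam g phi.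

Definition num_classes (T : eqType) (P : T -> Prop) (R : T -> T -> Prop)
  (N : nat) : Prop :=
  exists s : seq T,
    [/\ size s = N,
        forall x, x \in s -> P x,
        forall x0 i j, i < size s -> j < size s -> i != j ->
           ~ R (nth x0 s i) (nth x0 s j)
      & forall x, P x -> exists2 y, y \in s & R y x].

From HB Require Import structures.
From mathcomp Require Import all_boot all_order all_fingroup all_algebra.
Set Implicit Arguments. Unset Strict Implicit. Unset Printing Implicit Defensive.
Import GRing.Theory.

(* Only colours of weight at most a (on X) or b (on Y) occur in a colouring of
   weight (a, b), so the colourings counted by N_(a,b) are the images of the
   valid colourings of weight (a, b) with colours from a finite type; these form
   a finite G-set, and by the Cauchy-Frobenius lemma their number of orbits is the
   average over g of the number of colourings fixed by Gam g.  A fixed colouring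
   is the same as a colour for each cycle of Gam g, an X-colour for a cycle in X
   and a Y-colour for a cycle in Y, so the generating polynomial of the fixed
   colourings factors as the product of f_X(x^|C|) over the cycles C in X and
   of f_Y(y^|C|) over the cycles C in Y; grouping cycles by length gives the
   g-term of the bipartite cycle index. *)

Section Cycles.
Variables (A : finType) (s : {perm A}).

Lemma porbit_in_porbits a : porbit s a \in porbits s.
Proof. exact: imset_f. Qed.

Definition cycle_of (a : A) : {C in porbits s} := Sub (porbit s a) (porbit_in_porbits a).

Lemma cycle_ofP (C : {C in porbits s}) : exists a, C = cycle_of a.
Proof.
by case: C => C sC; case/imsetP: (sC) => a _ defC; exists a; apply: val_inj.
Qed.

Lemma eq_cycle_of a b : (cycle_of a == cycle_of b) = (a \in porbit s b).
Proof. exact: eq_porbit_mem. Qed.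

Lemma cycle_of_perm a : cycle_of (s a) = cycle_of a.
Proof. by apply/eqP; rewrite eq_cycle_of -[s a]/((s ^+ 1)%g a) mem_porbit. Qed.

Lemma sum_over_cycles (F : {C in porbits s} -> nat) :
  (\sum_(a : A) F (cycle_of a) = \sum_(C : {C in porbits s}) #|val C| * F C)%N.
Proof.
rewrite (partition_big cycle_of xpredT) //; apply: eq_bigr => C _.
rewrite (eq_bigr (fun=> F C)) => [|a /eqP -> //]; rewrite sum_nat_const.
have [b ->] := cycle_ofP C; congr (_ * _)%N; apply: eq_card => a.
exact: eq_cycle_of.
Qed.

Lemma porbit_subset (Z : {set A}) x :
  (forall a, (s a \in Z) = (a \in Z)) -> (porbit s x \subset Z) = (x \in Z).
Proof.
move=> sZ; apply/subsetP/idP => [-> // | xZ _ /porbitP [i ->]]; first exact: porbit_id.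
by rewrite permX; elim: i => //= i; rewrite sZ.
Qed.

Lemma prod_porbits_cyc_count (R : comPzSemiRingType) (Z : {set A}) (p : nat -> R) :
  (\prod_(C in porbits s | C \subset Z) p #|C| =
   \prod_(1 <= k < #|A|.+1) p k ^+ cyc_count s Z k)%R.
Proof.
symmetry; transitivity (\prod_(1 <= k < #|A|.+1)
    \prod_(C in porbits s | (C \subset Z) && (#|C| == k)) p #|C|)%R.
  apply: eq_bigr => k _; rewrite /cyc_count -prodr_const.
  apply: eq_big => [C | C]; first by rewrite !inE.
  by rewrite inE => /and3P [_ _ /eqP ->].
rewrite (exchange_big_dep [pred C | (C \in porbits s) && (C \subset Z)]) => [|k C _];
  last by case/and3P=> ? ? _; apply/andP.
apply: eq_bigr => C /andP [/imsetP [x _ ->] xZ].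
rewrite (eq_bigl (pred1 #|porbit s x|)) => [|k]; last by rewrite porbit_in_porbits xZ eq_sym.
rewrite big_const_seq count_uniq_mem ?iota_uniq //=.
by rewrite mem_index_iota ltnS lt0n card_porbit_neq0 max_card /= mulr1.
Qed.

Definition fixedb (C : eqType) (t : {ffun A -> C}) := [forall a, t (s a) == t a].

Lemma fixedb_porbit (C : eqType) (t : {ffun A -> C}) x y :
  fixedb t -> y \in porbit s x -> t y = t x.
Proof. by move=> /forallP fix_t /porbitP [i ->]; rewrite permX; elim: i => //= i <-; apply/eqP. Qed.

End Cycles.

Section TruncatedSeries.
Local Open Scope ring_scope.

(* A series of [fps2] is compared with a polynomial of rat[x][y], x being the
   outer variable, on the box [0, a0] x [0, b0] only: the coefficients of a
   Cauchy product in the box only involve coefficients in the box. *)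
Definition fps2_agree (a0 b0 : nat) (F : fps2) (P : {poly {poly rat}}) :=
  forall a b, (a <= a0)%N -> (b <= b0)%N -> F a b = P`_a`_b.

Section Agreement.
Variables a0 b0 : nat.
Local Notation agree := (fps2_agree a0 b0).

Lemma fps2_agree_one : agree fps2_one 1.
Proof.
move=> a b _ _; rewrite /fps2_one coef1; case: (a == 0%N) => /=; last by rewrite coef0.
by rewrite mulr1n coef1; case: (b == 0%N).
Qed.

Lemma fps2_agree_mul F H P Q : agree F P -> agree H Q -> agree (fps2_mul F H) (P * Q).
Proof.
move=> FP HQ a b le_a le_b; rewrite coefM coef_sum; apply: eq_bigr => i _.
rewrite coefM; apply: eq_bigr => j _.
have le_i : (i <= a0)%N by rewrite (leq_trans _ le_a) // -ltnS.
have le_j : (j <= b0)%N by rewrite (leq_trans _ le_b) // -ltnS.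
by rewrite FP // HQ // (leq_trans (leq_subr _ _)).
Qed.

Lemma fps2_agree_exp F P m : agree F P -> agree (fps2_exp F m) (P ^+ m).
Proof.
move=> FP; elim: m => [|m IH]; first exact: fps2_agree_one.
by rewrite exprS /fps2_exp iterS; apply: fps2_agree_mul.
Qed.

Lemma fps2_agree_prod (I : Type) (r : seq I) (Pr : pred I) (F : I -> fps2) P :
  (forall i, Pr i -> agree (F i) (P i)) ->
  agree (\big[fps2_mul/fps2_one]_(i <- r | Pr i) F i) (\prod_(i <- r | Pr i) P i).
Proof.
move=> FP; apply: (big_rec2 agree); first exact: fps2_agree_one.
by move=> i F' P' /FP; apply: fps2_agree_mul.
Qed.

End Agreement.

Lemma card_mul_weight (C : finType) (w : C -> nat) k a : (0 < k)%N ->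
  #|[pred c | a == (k * w c)%N]| =
    if (k %| a)%N then #|[pred c | w c == (a %/ k)%N]| else 0%N.
Proof.
move=> k_gt0; case: ifP => [/dvdnP [m ->] | k_ndvd].
  by rewrite mulnK //; apply: eq_card => c; rewrite !inE mulnC eqn_mul2l eqn0Ngt k_gt0 eq_sym.
by apply: eq_card0 => c; rewrite !inE; apply: contraFF k_ndvd => /eqP ->; apply: dvdn_mulr.
Qed.

Lemma coef_sum_Xn (R : nzRingType) (C : finType) (e : C -> nat) a :
  (\sum_(c : C) 'X^(e c) : {poly R})`_a = #|[pred c | a == e c]|%:R.
Proof.
rewrite coef_sum -sum1_card natr_sum [RHS]big_mkcond; apply: eq_bigr => c _.
by rewrite coefXn inE; case: (_ == _).
Qed.

Section SubstAgreement.
Variables (C : finType) (w : C -> nat) (f : nat -> nat) (k : nat).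
Hypothesis k_gt0 : (0 < k)%N.

Lemma fps2_agree_substX a0 b0 :
  (forall i, (i <= a0)%N -> #|[pred c | w c == i]| = f i) ->
  fps2_agree a0 b0 (substX f k) (\sum_(c : C) 'X^(k * w c)).
Proof.
move=> fib_w a b le_a _; rewrite coef_sum_Xn coefMn coef1 card_mul_weight // /substX.
case: (b == 0%N) => /=; last by rewrite mul0rn.
by case: ifP => // _; rewrite fib_w //; apply: leq_trans (leq_div _ _) _.
Qed.

Lemma fps2_agree_substY a0 b0 :
  (forall i, (i <= b0)%N -> #|[pred c | w c == i]| = f i) ->
  fps2_agree a0 b0 (substY f k) (\sum_(c : C) 'X^(k * w c))%:P.
Proof.
move=> fib_w a b _ le_b; rewrite coefC /substY.
case: (a == 0%N) => /=; last by rewrite coef0.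
rewrite coef_sum_Xn card_mul_weight //.
by case: ifP => // _; rewrite fib_w //; apply: leq_trans (leq_div _ _) _.
Qed.

End SubstAgreement.

End TruncatedSeries.

Section GeneratingPolynomials.
Local Open Scope ring_scope.

Definition monoXY (p q : nat) : {poly {poly rat}} := 'X^p * ('X^q)%:P.

Lemma coef_monoXY p q a b : (monoXY p q)`_a`_b = ((a == p) && (b == q))%:R.
Proof.
rewrite /monoXY mulrC mul_polyC coefZ coefXn.
by case: (a == p); rewrite ?mulr1 ?coefXn // mulr0 coef0.
Qed.

Lemma prod_monoXY (I : Type) (r : seq I) (P : pred I) (p q : I -> nat) :
  \prod_(i <- r | P i) monoXY (p i) (q i) =
  monoXY (\sum_(i <- r | P i) p i) (\sum_(i <- r | P i) q i).
Proof. by rewrite big_split /= prodrXr -rmorph_prod prodrXr. Qed.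

Lemma coef_sum_monoXY (T : finType) (D : pred T) (p q : T -> nat) a b :
  (\sum_(t | D t) monoXY (p t) (q t))`_a`_b =
  #|[pred t | [&& D t, p t == a & q t == b]]|%:R.
Proof.
rewrite !coef_sum -sum1_card natr_sum [RHS]big_mkcond [LHS]big_mkcond.
apply: eq_bigr => t _; rewrite coef_monoXY inE.
by rewrite (eq_sym a) (eq_sym b); case: (D t) => //=; case: ((p t == a) && (q t == b)).
Qed.

Section FixedColorings.
Variables (A : finType) (X : {set A}) (CX CY : finType) (wX : CX -> nat) (wY : CY -> nat).
Local Notation coloring := {ffun A -> CX + CY}.

Definition color_weightX (o : CX + CY) := if o is inl c then wX c else 0%N.
Definition color_weightY (o : CX + CY) := if o is inr c then wY c else 0%N.
Definition weightX (t : coloring) := (\sum_(a : A) color_weightX (t a))%N.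
Definition weightY (t : coloring) := (\sum_(a : A) color_weightY (t a))%N.
Definition validb (t : coloring) := [forall a, (a \in X) == is_inl (t a)].

Definition gfX k : {poly {poly rat}} := \sum_(c : CX) 'X^(k * wX c).
Definition gfY k : {poly {poly rat}} := (\sum_(c : CY) 'X^(k * wY c))%:P.

Lemma sum_cycle_colors k (inX : bool) :
  \sum_(o | inX == is_inl o) monoXY (k * color_weightX o) (k * color_weightY o) =
  if inX then gfX k else gfY k.
Proof.
rewrite big_sumType /=; case: inX.
  rewrite [X in _ + X]big_pred0 // addr0.
  by apply: eq_bigr => c _; rewrite /monoXY muln0 expr0 polyC1 mulr1.
rewrite [X in X + _]big_pred0 // add0r /gfY rmorph_sum.
by apply: eq_bigr => c _; rewrite /monoXY muln0 expr0 mul1r.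
Qed.

Lemma weightX_perm (s : {perm A}) (t : coloring) :
  weightX [ffun a => t (s a)] = weightX t.
Proof.
by rewrite /weightX [RHS](reindex_inj (@perm_inj _ s)); apply: eq_bigr => a _; rewrite ffunE.
Qed.

Lemma weightY_perm (s : {perm A}) (t : coloring) :
  weightY [ffun a => t (s a)] = weightY t.
Proof.
by rewrite /weightY [RHS](reindex_inj (@perm_inj _ s)); apply: eq_bigr => a _; rewrite ffunE.
Qed.

Lemma validb_perm (s : {perm A}) (t : coloring) : (forall a, (s a \in X) = (a \in X)) ->
  validb [ffun a => t (s a)] = validb t.
Proof.
move=> sX; apply/forallP/forallP => [valid_st a | valid_t a].
  by have := valid_st (s^-1%g a); rewrite ffunE -sX permKV.
by rewrite ffunE -sX.
Qed.

Variable s : {perm A}.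
Hypothesis sX : forall a, (s a \in X) = (a \in X).
Local Notation cycle := {C in porbits s}.

Definition cycle_allowed (C : cycle) (o : CX + CY) := (val C \subset X) == is_inl o.

Definition coloring_of_cycles (f : {ffun cycle -> CX + CY}) : coloring :=
  [ffun a => f (cycle_of s a)].

Lemma coloring_of_cycles_inj : injective coloring_of_cycles.
Proof.
move=> f g fg; apply/ffunP => C; have [a ->] := cycle_ofP C.
by have := congr1 (fun t : coloring => t a) fg; rewrite !ffunE.
Qed.

Lemma coloring_of_cyclesP t :
  (t \in coloring_of_cycles @: family cycle_allowed) = validb t && fixedb s t.
Proof.
apply/imsetP/andP => [[f /familyP f_allowed ->] | [/forallP t_valid t_fixed]].
  split; apply/forallP => a; rewrite !ffunE ?cycle_of_perm //.
  by rewrite -(porbit_subset _ sX); apply: f_allowed.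
have /fin_all_exists [f f_t] :
    forall C : cycle, exists o, forall a, cycle_of s a = C -> t a = o.
  move=> C; have [b ->] := cycle_ofP C; exists (t b) => a /eqP.
  by rewrite eq_cycle_of; apply: fixedb_porbit.
exists (finfun f); last by apply/ffunP => a; rewrite !ffunE -(f_t _ a).
apply/familyP => C; have [b defC] := cycle_ofP C.
by rewrite ffunE -(f_t C b (esym defC)) unfold_in /cycle_allowed defC /= porbit_subset.
Qed.

Lemma gf_fixed_colorings_cycles :
  \sum_(t | validb t && fixedb s t) monoXY (weightX t) (weightY t) =
  \prod_(C : cycle) \sum_(o | cycle_allowed C o)
     monoXY (#|val C| * color_weightX o) (#|val C| * color_weightY o).
Proof.
rewrite bigA_distr_big_dep -(eq_bigl _ _ coloring_of_cyclesP) big_imset /=;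
  last by move=> f g _ _; apply: coloring_of_cycles_inj.
apply: eq_bigr => f _; rewrite prod_monoXY /weightX /weightY.
by congr monoXY; rewrite -sum_over_cycles; apply: eq_bigr => a _; rewrite ffunE.
Qed.

Lemma gf_fixed_colorings :
  \sum_(t | validb t && fixedb s t) monoXY (weightX t) (weightY t) =
  \prod_(C in porbits s | C \subset X) gfX #|C| *
  \prod_(C in porbits s | C \subset ~: X) gfY #|C|.
Proof.
have sXC a : (s a \in ~: X) = (a \in ~: X) by rewrite !inE sX.
rewrite gf_fixed_colorings_cycles.
pose F (C : {set A}) := if C \subset X then gfX #|C| else gfY #|C|.
rewrite (eq_bigr (fun C : cycle => F (val C))) => [|C _]; last exact: sum_cycle_colors.
rewrite (bigID (fun C : cycle => val C \subset X)) /=.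
congr (_ * _); rewrite [RHS]big_sub_cond.
  by apply: eq_bigr => C sub_CX; rewrite /F sub_CX.
apply: eq_big => [C | C /negbTE not_sub_CX]; last by rewrite /F not_sub_CX.
have [x ->] := cycle_ofP C.
by rewrite /= !porbit_subset // inE.
Qed.

Lemma cycle_index_term_coef (fX fY : nat -> nat) a0 b0 :
  (forall i, (i <= a0)%N -> #|[pred c | wX c == i]| = fX i) ->
  (forall i, (i <= b0)%N -> #|[pred c | wY c == i]| = fY i) ->
  (\big[fps2_mul/fps2_one]_(1 <= k < #|A|.+1)
      fps2_mul (fps2_exp (substX fX k) (cyc_count s X k))
               (fps2_exp (substY fY k) (cyc_count s (~: X) k))) a0 b0 =
  #|[pred t | [&& validb t && fixedb s t, weightX t == a0 & weightY t == b0]]|%:R.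
Proof.
move=> fibX fibY; rewrite -coef_sum_monoXY gf_fixed_colorings !prod_porbits_cyc_count.
rewrite -big_split /= big_seq [in RHS]big_seq.
apply: (fps2_agree_prod (a0 := a0) (b0 := b0)) => // k.
rewrite mem_index_iota => /andP [k_gt0 _].
by apply: fps2_agree_mul; apply: fps2_agree_exp;
  [apply: fps2_agree_substX | apply: fps2_agree_substY].
Qed.

End FixedColorings.

End GeneratingPolynomials.

Lemma num_classes_uniq (T : eqType) (P : T -> Prop) (R : T -> T -> Prop) (s : seq T) :
  uniq s -> (forall x, x \in s -> P x) -> {in s &, forall x y, R x y -> x = y} ->
  (forall x, P x -> exists2 y, y \in s & R y x) -> num_classes P R (size s).
Proof.
move=> s_uniq sP R_s_eq Pcover; exists s; split=> // x0 i j lt_i lt_j neq_ij Rij.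
move/negP: neq_ij; apply; rewrite -(nth_uniq x0 lt_i lt_j s_uniq).
by apply/eqP/R_s_eq => //; apply: mem_nth.
Qed.

Lemma num_classes_image (T U : eqType) (F : T -> U) (P : T -> Prop) (R : T -> T -> Prop)
    (P' : U -> Prop) (R' : U -> U -> Prop) N :
  (forall u, P' u <-> exists2 t, P t & F t = u) ->
  (forall t t', P t -> P t' -> R' (F t) (F t') <-> R t t') ->
  num_classes P R N -> num_classes P' R' N.
Proof.
move=> P'E R'E [s [size_s sP s_unrel s_cover]]; exists (map F s); split.
- by rewrite size_map.
- by move=> u /mapP [t /sP Pt ->]; apply/P'E; exists t.
- move=> u0 i j; rewrite size_map => lt_i lt_j neq_ij.
  have [t0 _] : exists t0 : T, true by case: (s) lt_i => // t0; exists t0.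
  rewrite !(nth_map t0) // => /R'E Rij.
  by apply: (s_unrel t0 i j lt_i lt_j neq_ij); apply: Rij; apply/sP/mem_nth.
- move=> u /P'E [t Pt <-]; have [y sy Ryt] := s_cover t Pt.
  by exists (F y); [apply: map_f | apply/R'E => //; apply: sP].
Qed.

Section OrbitRepresentatives.
Variables (aT : finGroupType) (G : {group aT}) (T : finType) (to : action G T).

Definition orbit_rep (t : T) := odflt t [pick u in orbit to G t].

Lemma orbit_rep_in t : orbit_rep t \in orbit to G t.
Proof. by rewrite /orbit_rep; case: pickP => [u // | /(_ t)]; rewrite /= orbit_refl. Qed.

Let orbitG_sym t u : (u \in orbit to G t) = (t \in orbit to G u).
Proof. exact: (orbit_in_sym to (subxx G)). Qed.

Let orbitG_eqP t u : reflect (orbit to G t = orbit to G u) (t \in orbit to G u).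
Proof. exact: (orbit_in_eqP (subxx G)). Qed.

Lemma orbit_rep_eq t u : u \in orbit to G t -> orbit_rep u = orbit_rep t.
Proof.
rewrite orbitG_sym => /orbitG_eqP eq_ut; rewrite /orbit_rep eq_ut.
by case: pickP => // /(_ u); rewrite /= orbit_refl.
Qed.

Lemma num_classes_orbits (S : {set T}) : [acts G, on S | to] ->
  num_classes (fun t => t \in S) (fun t u => u \in orbit to G t) #|orbit to G @: S|.
Proof.
move=> actsS; pose reps := [set t in S | orbit_rep t == t].
have reps_eq : {in reps &, forall t u, u \in orbit to G t -> t = u}.
  move=> t u /setIdP [_ /eqP rep_t] /setIdP [_ /eqP rep_u] /orbit_rep_eq.
  by rewrite rep_t rep_u.
have rep_reps t : t \in S -> orbit_rep t \in reps.
  move=> St; rewrite inE (orbit_rep_eq (orbit_rep_in t)) eqxx andbT.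
  by have /orbitP [g Gg <-] := orbit_rep_in t; rewrite (acts_act actsS).
have -> : #|orbit to G @: S| = size (enum reps).
  rewrite -cardE -(card_in_imset (f := orbit to G) (D := reps)); last first.
    by move=> t u rt ru /esym/orbitG_eqP; apply: reps_eq.
  suff -> : orbit to G @: S = orbit to G @: reps by [].
  apply/setP => O.
  apply/imsetP/imsetP => [[t St ->] | [t /setIdP [St _] ->]]; last by exists t.
  exists (orbit_rep t); first exact: rep_reps.
  by apply/esym/orbitG_eqP/orbit_rep_in.
apply: num_classes_uniq => [|t|t u|t St]; rewrite ?mem_enum ?enum_uniq //.
- by case/setIdP.
- exact: reps_eq.
exists (orbit_rep t); first by rewrite mem_enum rep_reps.
by rewrite orbitG_sym orbit_rep_in.
Qed.

End OrbitRepresentatives.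

Section ColoringAction.
Variables (gT : finGroupType) (G : {group gT}) (A : finType)
  (Gam : {morphism G >-> {perm A}}) (C : finType).
Local Open Scope group_scope.

(* (g phi)(a) = phi (g a) composes as a left action, while actions in MathComp
   act on the right. *)
Definition act_coloring (t : {ffun A -> C}) (g : gT) : {ffun A -> C} :=
  [ffun a => t (Gam g^-1 a)].

Lemma act_coloring_is_action : is_action G act_coloring.
Proof.
split=> [g t u eq_tu | t g h Gg Gh]; apply/ffunP => a.
  by have := congr1 (fun v : {ffun A -> C} => v ((Gam g^-1)^-1 a)) eq_tu; rewrite !ffunE permKV.
by rewrite !ffunE invMg morphM ?groupV // permM.
Qed.

Definition coloring_action := Action act_coloring_is_action.

Lemma afix_coloring g t : g \in G ->
  (t \in 'Fix_coloring_action[g]) = fixedb (Gam g) t.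
Proof.
move=> Gg; apply/afix1P/forallP => [fix_t a | fix_t].
  by rewrite -{1}fix_t /= ffunE morphV // permK.
apply/ffunP => a; rewrite /= ffunE morphV //.
by rewrite -{2}[a](permKV (Gam g)) (eqP (fix_t _)).
Qed.

End ColoringAction.

Section CountingOrbits.
Variables (gT : finGroupType) (G : {group gT}) (A : finType)
  (Gam : {morphism G >-> {perm A}}) (X : {set A})
  (CX CY : finType) (wX : CX -> nat) (wY : CY -> nat).
Hypothesis GamX : forall g a, g \in G -> (Gam g a \in X) = (a \in X).
Local Notation to := (coloring_action Gam (CX + CY)%type).

Definition colorings_of_weight a b := [set t : {ffun A -> CX + CY} |
  [&& validb X t, weightX wX t == a & weightY wY t == b]].

Lemma acts_colorings_of_weight a b : [acts G, on colorings_of_weight a b | to].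
Proof.
apply/subsetP => g Gg; rewrite !inE Gg; apply/subsetP => t; rewrite !inE /=.
by rewrite validb_perm ?weightX_perm ?weightY_perm // => c; rewrite GamX ?groupV.
Qed.

Lemma card_Fix_colorings_of_weight g a b : g \in G ->
  #|'Fix_(colorings_of_weight a b | to)[g]%g| =
  #|[pred t | [&& validb X t && fixedb (Gam g) t, weightX wX t == a & weightY wY t == b]]|.
Proof.
move=> Gg; apply: eq_card => t; rewrite in_setI afix_coloring // !inE.
by rewrite andbAC.
Qed.

Lemma card_orbits_cycle_index (fX fY : nat -> nat) a b :
  (forall i, i <= a -> #|[pred c | wX c == i]| = fX i) ->
  (forall i, i <= b -> #|[pred c | wY c == i]| = fY i) ->
  (#|orbit to G @: colorings_of_weight a b|%:R)%R =
  Ztilde G Gam X (~: X) (substX fX) (substY fY) a b.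
Proof.
move=> fibX fibY; rewrite /Ztilde /fps2_scale.
rewrite (big_morph (fun F : fps2 => F a b) (id1 := 0%R) (op1 := +%R)) //.
under eq_bigr => g Gg do rewrite (cycle_index_term_coef (fun c => GamX c Gg) fibX fibY)
  -card_Fix_colorings_of_weight //.
rewrite -natr_sum Frobenius_Cauchy ?acts_colorings_of_weight // natrM mulrCA mulVf ?mulr1 //.
by rewrite Num.Theory.pnatr_eq0 -lt0n cardG_gt0.
Qed.

End CountingOrbits.

Section ColorEmbedding.
Variables (gT : finGroupType) (G : {group gT}) (A : finType)
  (Gam : {morphism G >-> {perm A}}) (X : {set A})
  (OX OY : eqType) (wX : OX -> nat) (wY : OY -> nat)
  (CX CY : finType) (eX : CX -> OX) (eY : CY -> OY).
Hypotheses (eX_inj : injective eX) (eY_inj : injective eY).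
Local Notation to := (coloring_action Gam (CX + CY)%type).

Definition embed_color (o : CX + CY) : OX + OY :=
  match o with inl c => inl (eX c) | inr c => inr (eY c) end.

Definition embed_coloring (t : {ffun A -> CX + CY}) : {ffun A -> OX + OY} :=
  [ffun a => embed_color (t a)].

Lemma embed_coloring_inj : injective embed_coloring.
Proof.
move=> t u /ffunP eq_tu; apply/ffunP => a; have := eq_tu a; rewrite !ffunE.
by case: (t a) (u a) => [c|c] [d|d] //= [] => [/eX_inj | /eY_inj] ->.
Qed.

Lemma embed_coloring_act t g : g \in G ->
  embed_coloring (to t g^-1%g) = act_col Gam g (embed_coloring t).
Proof. by move=> Gg; apply/ffunP => a; rewrite /act_col /= !ffunE invgK. Qed.

Lemma valid_embed_coloring t : valid X (~: X) (embed_coloring t) <-> validb X t.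
Proof.
split=> [valid_t | /forallP valid_t a]; last first.
  by rewrite ffunE inE (eqP (valid_t a)); case: (t a).
by apply/forallP => a; have [-> _] := valid_t a; rewrite ffunE; case: (t a).
Qed.

Lemma wtX_embed_coloring t :
  validb X t -> wtX wX X (embed_coloring t) = weightX (wX \o eX) t.
Proof.
move=> /forallP valid_t; rewrite /weightX (bigID (mem X)) /= [X in _ + X]big1 ?addn0.
  by apply: eq_bigr => a _; rewrite ffunE; case: (t a).
by move=> a /negbTE aX; have := valid_t a; rewrite aX; case: (t a).
Qed.

Lemma wtY_embed_coloring t :
  validb X t -> wtY wY (~: X) (embed_coloring t) = weightY (wY \o eY) t.
Proof.
move=> /forallP valid_t; rewrite /weightY (bigID (mem (~: X))) /= [X in _ + X]big1 ?addn0.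
  by apply: eq_bigr => a _; rewrite ffunE; case: (t a).
by move=> a; rewrite inE negbK => aX; have := valid_t a; rewrite aX; case: (t a).
Qed.

Lemma orbit_rel_embed_coloring t u :
  orbit_rel G Gam (embed_coloring t) (embed_coloring u) <-> u \in orbit to G t.
Proof.
split=> [[g Gg] | /orbitP [g Gg <-]].
  by rewrite -embed_coloring_act // => /embed_coloring_inj ->; rewrite mem_orbit ?groupV.
by exists g^-1%g; rewrite ?groupV // -embed_coloring_act ?groupV // invgK.
Qed.

Hypothesis GamX : forall g a, g \in G -> (Gam g a \in X) = (a \in X).
Variables a b : nat.
Hypothesis eX_onto : forall o, wX o <= a -> exists c, eX c = o.
Hypothesis eY_onto : forall o, wY o <= b -> exists c, eY c = o.
Local Notation S := (colorings_of_weight X (wX \o eX) (wY \o eY) a b).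

Lemma weighted_coloringP phi :
  [/\ valid X (~: X) phi, wtX wX X phi = a & wtY wY (~: X) phi = b] <->
  exists2 t, t \in S & embed_coloring t = phi.
Proof.
split=> [[valid_phi wX_phi wY_phi] | [t S_t <-]]; last first.
  move: S_t; rewrite inE => /and3P [valid_t /eqP wX_t /eqP wY_t].
  by rewrite wtX_embed_coloring ?wtY_embed_coloring //; split=> //; apply/valid_embed_coloring.
have /fin_all_exists [t embed_t] : forall c, exists o, embed_color o = phi c.
  move=> c; case phi_c: (phi c) => [o | o].
    have [|x <-] := eX_onto (o := o); last by exists (inl x).
    by rewrite -wX_phi /wtX (bigD1 c) ?phi_c ?leq_addr //= (proj1 (valid_phi c)) phi_c.
  have [|y <-] := eY_onto (o := o); last by exists (inr y).
  by rewrite -wY_phi /wtY (bigD1 c) ?phi_c ?leq_addr //= (proj2 (valid_phi c)) phi_c.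
have embed_t' : embed_coloring [ffun c => t c] = phi.
  by apply/ffunP => c; rewrite !ffunE.
have valid_t : validb X [ffun c => t c] by apply/valid_embed_coloring; rewrite embed_t'.
exists [ffun c => t c] => //; rewrite inE valid_t.
by rewrite -wtX_embed_coloring // -wtY_embed_coloring // embed_t' wX_phi wY_phi !eqxx.
Qed.

Lemma num_classes_weighted_colorings :
  num_classes (fun phi => [/\ valid X (~: X) phi, wtX wX X phi = a & wtY wY (~: X) phi = b])
    (orbit_rel G Gam) #|orbit to G @: S|.
Proof.
apply: num_classes_image (num_classes_orbits (acts_colorings_of_weight _ _ GamX a b)).
  exact: weighted_coloringP.
by move=> t u _ _; apply: orbit_rel_embed_coloring.
Qed.

End ColorEmbedding.

Lemma bounded_weight_colors (O : eqType) (w : O -> nat) (fib : nat -> nat) m :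
  (forall i, exists s : seq O,
     [/\ uniq s, size s = fib i & forall o, (o \in s) = (w o == i)]) ->
  exists (C : finType) (e : C -> O),
    [/\ injective e, forall o, w o <= m -> exists c, e c = o
      & forall i, i <= m -> #|[pred c | w (e c) == i]| = fib i].
Proof.
move=> fibP; have [L [L_uniq LE]] : exists L, uniq L /\ forall o, (o \in L) = (w o <= m).
  elim: m => [|m [L [L_uniq LE]]].
    by have [s [s_uniq _ sE]] := fibP 0; exists s; split=> // o; rewrite sE leqn0.
  have [s [s_uniq _ sE]] := fibP m.+1; exists (L ++ s); split=> [|o].
    rewrite cat_uniq L_uniq s_uniq andbT /=.
    by apply/hasPn => o; rewrite sE LE => /eqP ->; rewrite ltnn.
  by rewrite mem_cat LE sE [RHS]leq_eqVlt ltnS orbC.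
exists 'I_(size L), (tnth (in_tuple L)); split=> [|o | i le_im].
- exact/tuple_uniqP.
- by rewrite -LE => /(tnthP (in_tuple L)) [c ->]; exists c.
have [s [s_uniq <- sE]] := fibP i.
rewrite -(size_image (tnth (in_tuple L))); apply/perm_size/uniq_perm => [||o] //.
  by rewrite map_inj_uniq ?enum_uniq //; apply/tuple_uniqP.
rewrite sE; apply/imageP/eqP => [[c /eqP wc ->] // | wo].
have /(tnthP (in_tuple L)) [c def_o] : o \in L by rewrite LE wo.
by exists c; rewrite // inE -def_o wo.
Qed.

Theorem mainTheorem2 (gT : finGroupType) (G : {group gT}) (A : finType)
  (Gam : {morphism G >-> {perm A}}) (X Y : {set A})
  (OX OY : eqType) (wX : OX -> nat) (wY : OY -> nat) (fX fY : nat -> nat) :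
  X :&: Y = set0 -> X :|: Y = setT ->
  (forall g a, g \in G ->
     ((Gam g a \in X) = (a \in X)) /\ ((Gam g a \in Y) = (a \in Y))) ->
  (forall o, 0 < wX o) -> (forall o, 0 < wY o) ->
  (forall i, exists s : seq OX,
     [/\ uniq s, size s = fX i & forall o, (o \in s) = (wX o == i)]) ->
  (forall i, exists s : seq OY,
     [/\ uniq s, size s = fY i & forall o, (o \in s) = (wY o == i)]) ->
  forall a b, exists N : nat,
    num_classes
      (fun phi : {ffun A -> OX + OY} =>
         [/\ valid X Y phi, wtX wX X phi = a & wtY wY Y phi = b])
      (orbit_rel G Gam) N
    /\ (N%:R)%R = Ztilde G Gam X Y (substX fX) (substY fY) a b.
Proof.
move=> disjXY coverXY GamXY _ _ fibX fibY a b.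
have -> : Y = ~: X.
  apply/setP => c; move/setP/(_ c): disjXY; move/setP/(_ c): coverXY.
  by rewrite !inE; case: (c \in X); case: (c \in Y).
have GamX g c : g \in G -> (Gam g c \in X) = (c \in X) by case/(GamXY g c).
have [CX [eX [eX_inj eX_onto fibCX]]] := bounded_weight_colors a fibX.
have [CY [eY [eY_inj eY_onto fibCY]]] := bounded_weight_colors b fibY.
exists #|orbit (coloring_action Gam (CX + CY)%type) G @:
          colorings_of_weight X (wX \o eX) (wY \o eY) a b|.
split; first exact: num_classes_weighted_colorings.
exact: card_orbits_cycle_index.
Qed.
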